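(* Let $\alpha,\beta,\gamma\in\mathbb R$ with $\alpha\beta>0$, and let $g\in C^0([0,1))$ be non-negative. Let $w\in C^1([0,1))\cap C^2((0,1))$ be a solution of the inhomogeneous hypergeometric equation $$z(1-z)w''(z)+(\gamma-(\alpha+\beta+1)z)w'(z)-\alpha\beta\,w(z)=g(z),\qquad 0\le z<1,$$ with $w(0)\ge0$ and $w'(0)>0$. Then $w$ is strictly increasing on $[0,1)$. *)

From Stdlib Require Import Reals.
From Coquelicot Require Export Coquelicot.
Open Scope R_scope.

Definition is_right_derive (f : R -> R) (x l : R) : Prop :=
  filterlim (fun h => (f (x + h) - f x) / h) (at_right 0) (locally l).

Definition right_continuous (f : R -> R) (x : R) : Prop :=
  filterlim f (at_right x) (locally (f x)).

(** If [w'] had a zero in [(0,1)], let [m] be the first one. Then [w'] is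
    positive on [[0,m)], so [w(m) > w(0) >= 0], and [w'] decreases to [0] at
    [m], so [w''(m) <= 0]. At [m] the equation reads
    [m(1-m) w''(m) - alpha beta w(m) = g(m) >= 0], whose left-hand side is
    negative. Hence [w' > 0] on [[0,1)] and [w] is strictly increasing. *)

From Stdlib Require Import Reals Lra.
From Coquelicot Require Import Coquelicot.
Open Scope R_scope.

Lemma filterlim_locally_gt {T : Type} (F : (T -> Prop) -> Prop) (f : T -> R) (l c : R) :
  filterlim f F (locally l) -> c < l -> F (fun t => c < f t).
Proof. intros Hf Hcl. exact (Hf (fun u => c < u) (open_gt c l Hcl)). Qed.

Lemma filterlim_locally_lt {T : Type} (F : (T -> Prop) -> Prop) (f : T -> R) (l c : R) :
  filterlim f F (locally l) -> l < c -> F (fun t => f t < c).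
Proof. intros Hf Hlc. exact (Hf (fun u => u < c) (open_lt c l Hlc)). Qed.

Lemma at_right_ex (a b : R) (P : R -> Prop) :
  a < b -> at_right a P -> exists y, a < y < b /\ P y.
Proof.
  intros Hab [[d Hd] HP]. simpl in HP.
  pose proof (Rmin_l d (b - a)). pose proof (Rmin_r d (b - a)).
  assert (0 < Rmin d (b - a)) by (apply Rmin_glb_lt; lra).
  exists (a + Rmin d (b - a) / 2). split; [lra|].
  apply HP; [|lra].
  change (Rabs (a + Rmin d (b - a) / 2 - a) < d). rewrite Rabs_right; lra.
Qed.

Lemma at_left_ex (a b : R) (P : R -> Prop) :
  b < a -> at_left a P -> exists y, b < y < a /\ P y.
Proof.
  intros Hba [[d Hd] HP]. simpl in HP.
  pose proof (Rmin_l d (a - b)). pose proof (Rmin_r d (a - b)).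
  assert (0 < Rmin d (a - b)) by (apply Rmin_glb_lt; lra).
  exists (a - Rmin d (a - b) / 2). split; [lra|].
  apply HP; [|lra].
  change (Rabs (a - Rmin d (a - b) / 2 - a) < d). rewrite Rabs_left; lra.
Qed.

Lemma is_right_derive_pos (f : R -> R) (x l : R) :
  is_right_derive f x l -> 0 < l -> at_right x (fun y => f x < f y).
Proof.
  intros Hf Hl.
  destruct (filterlim_locally_gt _ _ _ 0 Hf Hl) as [d Hq].
  exists d. intros y Hy Hxy.
  assert (Hh : ball 0 d (y - x)).
  { change (Rabs (y - x - 0) < d). rewrite Rminus_0_r. exact Hy. }
  specialize (Hq _ Hh ltac:(lra)). simpl in Hq. rewrite Rplus_minus in Hq.
  cut (0 < f y - f x); [lra|].
  replace (f y - f x) with ((f y - f x) / (y - x) * (y - x)) by (field; lra).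
  apply Rmult_lt_0_compat; lra.
Qed.

Lemma is_derive_pos_at_left (f : R -> R) (x l : R) :
  is_derive f x l -> 0 < l -> at_left x (fun y => f y < f x).
Proof.
  intros Hf Hl. apply is_derive_Reals in Hf.
  destruct (Hf l Hl) as [d Hq].
  exists d. intros y Hy Hyx.
  assert (Hh : Rabs (y - x) < d) by exact Hy.
  specialize (Hq (y - x) ltac:(lra) Hh). rewrite Rplus_minus in Hq.
  apply Rabs_def2 in Hq.
  cut (f y - f x < 0); [lra|].
  replace (f y - f x) with ((f y - f x) / (y - x) * (y - x)) by (field; lra).
  apply Rmult_pos_neg; lra.
Qed.

(** Stdlib's mean value theorem yields an interior point, so the increase is
    strict without any sign information on [df b]. *)
Lemma incr_of_right_derive_pos (f df : R -> R) (a b : R) :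
  is_right_derive f a (df a) -> 0 < df a ->
  (forall z, a < z <= b -> is_derive f z (df z)) ->
  (forall z, a < z < b -> 0 < df z) ->
  forall x y, a <= x -> x < y -> y <= b -> f x < f y.
Proof.
  intros Hf0 Hdf0 Hf Hdf.
  assert (Hinner : forall x y, a < x -> x < y -> y <= b -> f x < f y).
  { intros x y Hx Hxy Hy.
    destruct (MVT_cor2 f df x y Hxy) as [c [Hmvt Hc]].
    { intros c Hc. apply is_derive_Reals, Hf. lra. }
    assert (0 < df c * (y - x)) by (apply Rmult_lt_0_compat; [apply Hdf|]; lra).
    lra. }
  intros x y Hx Hxy Hy.
  destruct (Req_dec x a) as [-> | Hxa]; [|apply Hinner; lra].
  destruct (at_right_ex a y _ Hxy (is_right_derive_pos _ _ _ Hf0 Hdf0)) as [h [Hh Hfh]].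
  specialize (Hinner h y ltac:(lra) ltac:(lra) Hy). lra.
Qed.

Lemma right_continuous_pos_near (f : R -> R) (a : R) :
  right_continuous f a -> 0 < f a ->
  exists d, 0 < d /\ forall s, a <= s < a + d -> 0 < f s.
Proof.
  intros Hra Hfa.
  destruct (filterlim_locally_gt _ _ _ 0 Hra Hfa) as [[d Hd] Hnear]. simpl in Hnear.
  exists d. split; [exact Hd|]. intros s Hs.
  destruct (Req_dec s a) as [-> | Hsa]; [exact Hfa|].
  apply Hnear; [|lra]. change (Rabs (s - a) < d). rewrite Rabs_right; lra.
Qed.

Lemma exists_first_zero (f : R -> R) (a z : R) :
  a < z -> 0 < f a -> right_continuous f a ->
  (forall x, a < x <= z -> continuous f x) -> f z <= 0 ->
  exists m, a < m <= z /\ f m = 0 /\ forall s, a <= s < m -> 0 < f s.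
Proof.
  intros Haz Hfa Hra Hcont Hfz.
  set (E t := a <= t <= z /\ forall s, a <= s <= t -> 0 < f s).
  destruct (completeness E) as [m [Hub Hlub]].
  { exists z. intros t [Ht _]. lra. }
  { exists a. split; [lra|]. intros s Hs. replace s with a by lra. exact Hfa. }
  assert (Hmz : m <= z) by (apply Hlub; intros t [Ht _]; lra).
  assert (Ham : a < m).
  { destruct (right_continuous_pos_near f a Hra Hfa) as [d [Hd Hnear]].
    pose proof (Rmin_l d (z - a)). pose proof (Rmin_r d (z - a)).
    assert (0 < Rmin d (z - a)) by (apply Rmin_glb_lt; lra).
    assert (Et : E (a + Rmin d (z - a) / 2)).
    { split; [lra|]. intros s Hs. apply Hnear. lra. }
    specialize (Hub _ Et). lra. }
  assert (Hpos : forall s, a <= s < m -> 0 < f s).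
  { intros s Hs. destruct (Rlt_le_dec 0 (f s)) as [|Hn]; [assumption|exfalso].
    assert (Hs_ub : is_upper_bound E s).
    { intros t [_ Ht]. apply Rnot_lt_le. intro Hst. specialize (Ht s ltac:(lra)). lra. }
    specialize (Hlub s Hs_ub). lra. }
  assert (Hfm_ge : 0 <= f m).
  { apply Rnot_lt_le. intro Hneg.
    pose proof (filterlim_locally_lt _ _ _ 0 (Hcont m ltac:(lra)) Hneg) as Hloc.
    destruct (at_left_ex m a _ Ham (filter_le_within _ _ Hloc)) as [s [Hs Hfs]].
    specialize (Hpos s ltac:(lra)). lra. }
  assert (Hfm_le : f m <= 0).
  { apply Rnot_lt_le. intro Hfm.
    assert (Hmz' : m < z) by (destruct (Req_dec m z) as [<- |]; lra).
    destruct (filterlim_locally_gt _ _ _ 0 (Hcont m ltac:(lra)) Hfm) as [d Hd].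
    pose proof (Rmin_l (m + d / 2) z). pose proof (Rmin_r (m + d / 2) z).
    pose proof (cond_pos d).
    set (t := Rmin (m + d / 2) z) in *.
    assert (m < t) by (apply Rmin_glb_lt; lra).
    assert (Et : E t).
    { split; [lra|]. intros s Hs.
      destruct (Rlt_le_dec s m); [apply Hpos; lra|].
      apply Hd. change (Rabs (s - m) < d). rewrite Rabs_right; lra. }
    specialize (Hub t Et). lra. }
  exists m. repeat split; [lra | lra | lra | exact Hpos].
Qed.

Section SecondOrderLinearODE.

Variables (a b c : R) (p q g w dw d2w : R -> R).

Hypothesis Hc : 0 < c.
Hypothesis Hp : forall z, a < z < b -> 0 < p z.
Hypothesis Hg : forall z, a < z < b -> 0 <= g z.
Hypothesis Hw_der_a : is_right_derive w a (dw a).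
Hypothesis Hw_der : forall z, a < z < b -> is_derive w z (dw z).
Hypothesis Hdw_cont_a : right_continuous dw a.
Hypothesis Hdw_der : forall z, a < z < b -> is_derive dw z (d2w z).
Hypothesis Heq : forall z, a < z < b -> p z * d2w z + q z * dw z - c * w z = g z.
Hypothesis Hw_a : 0 <= w a.
Hypothesis Hdw_a : 0 < dw a.

Lemma ode_derive_pos : forall z, a <= z < b -> 0 < dw z.
Proof.
  intros z Hz. destruct (Rlt_le_dec 0 (dw z)) as [| Hdwz]; [assumption | exfalso].
  assert (Haz : a < z) by (destruct (Req_dec z a) as [-> |]; lra).
  assert (Hdw_cont : forall x, a < x <= z -> continuous dw x).
  { intros x Hx. apply (@ex_derive_continuous R_AbsRing R_NormedModule). exists (d2w x). apply Hdw_der. lra. }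
  destruct (exists_first_zero dw a z Haz Hdw_a Hdw_cont_a Hdw_cont Hdwz)
    as [m [Hm [Hdwm Hpos]]].
  assert (Hwm : w a < w m).
  { apply (incr_of_right_derive_pos w dw a m Hw_der_a Hdw_a); try lra.
    - intros x Hx. apply Hw_der. lra.
    - intros x Hx. apply Hpos. lra. }
  assert (Hd2wm : d2w m <= 0).
  { apply Rnot_lt_le. intro Hd2w.
    pose proof (is_derive_pos_at_left dw m _ (Hdw_der m ltac:(lra)) Hd2w) as Hleft.
    destruct (at_left_ex m a _ (proj1 Hm) Hleft) as [s [Hs Hdws]].
    specialize (Hpos s ltac:(lra)). lra. }
  specialize (Heq m ltac:(lra)). specialize (Hg m ltac:(lra)).
  rewrite Hdwm in Heq.
  assert (p m * d2w m <= 0) by (apply Rmult_le_0_l; [apply Rlt_le, Hp |]; lra).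
  assert (0 < c * w m) by (apply Rmult_lt_0_compat; lra).
  lra.
Qed.

End SecondOrderLinearODE.

Theorem lemma4p5 (alpha beta gamma : R) (g w dw d2w : R -> R)
  (Hab : alpha * beta > 0)
  (* g in C^0([0,1)), g >= 0 *)
  (Hg_cont : forall z, 0 < z < 1 -> continuous g z)
  (Hg_cont0 : right_continuous g 0)
  (Hg_nonneg : forall z, 0 <= z < 1 -> 0 <= g z)
  (* w in C^1([0,1)) with derivative dw *)
  (Hw_der0 : is_right_derive w 0 (dw 0))
  (Hw_der : forall z, 0 < z < 1 -> is_derive w z (dw z))
  (Hdw_cont0 : right_continuous dw 0)
  (Hdw_cont : forall z, 0 < z < 1 -> continuous dw z)
  (* w in C^2((0,1)) with second derivative d2w *)
  (Hdw_der : forall z, 0 < z < 1 -> is_derive dw z (d2w z))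
  (Hd2w_cont : forall z, 0 < z < 1 -> continuous d2w z)
  (* the equation on [0,1) (at z = 0 the w'' term vanishes) *)
  (Heq : forall z, 0 <= z < 1 ->
     z * (1 - z) * d2w z + (gamma - (alpha + beta + 1) * z) * dw z
       - alpha * beta * w z = g z)
  (Hw0 : 0 <= w 0)
  (Hdw0 : 0 < dw 0) :
  forall x y, 0 <= x -> x < y -> y < 1 -> w x < w y.
Proof.
  assert (Hdw_pos : forall z, 0 <= z < 1 -> 0 < dw z).
  { apply (ode_derive_pos 0 1 (alpha * beta) (fun z => z * (1 - z))
             (fun z => gamma - (alpha + beta + 1) * z) g w dw d2w);
      try assumption; intros z Hz.
    - apply Rmult_lt_0_compat; lra.
    - apply Hg_nonneg. lra.
    - apply Heq. lra. }
  intros x y Hx Hxy Hy.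
  apply (incr_of_right_derive_pos w dw 0 y Hw_der0 Hdw0); try lra.
  - intros z Hz. apply Hw_der. lra.
  - intros z Hz. apply Hdw_pos. lra.
Qed.
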